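(* Let $f:R\to S$ be a ring morphism. (1) If $R$ is quasi-Prüferian and $f$ is either an integral morphism or a flat epimorphism, then $S$ is quasi-Prüferian. (2) If $S$ is quasi-Prüferian and $f$ is injective and integral, then $R$ is quasi-Prüferian. (3) If $R$ is quasi-Prüferian and $f$ is a quasi-Prüfer extension, then $S$ is quasi-Prüferian.
   Context: All rings are commutative with identity. For a ring $A$, $A(X):=A[X]_{\Sigma_A}$ with $\Sigma_A=\{p\in A[X]: \text{the coefficients of } p \text{ generate } A\}$. A ring $A$ is quasi-Prüferian if the induced map $\mathrm{Spec}(A(X))\to\mathrm{Spec}(A)$ is injective (equivalently, every prime ideal $Q$ of $A[X]$ contained in $M[X]$ for some maximal ideal $M$ of $A$ equals $(Q\cap A)[X]$). An extension $A\subseteq B$ is Prüfer if $A\subseteq C$ is a flat epimorphism for each intermediate ring $C$, and quasi-Prüfer if it factors as $A\subseteq A'\subseteq B$ with $A\subseteq A'$ integral and $A'\subseteq B$ Prüfer. *)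

From HB Require Import structures.
From mathcomp Require Import all_boot all_order all_algebra.
Set Implicit Arguments. Unset Strict Implicit. Unset Printing Implicit Defensive.
Import GRing.Theory.
Local Open Scope ring_scope.

Definition is_ideal (A : comPzRingType) (I : A -> Prop) : Prop :=
  I 0 /\ (forall x y, I x -> I y -> I (x + y)) /\ (forall r x, I x -> I (r * x)).

Definition is_prime_ideal (A : comPzRingType) (I : A -> Prop) : Prop :=
  is_ideal I /\ ~ I 1 /\ (forall x y, I (x * y) -> I x \/ I y).

Definition in_Sigma (A : comNzRingType) (p : {poly A}) : Prop :=
  exists c : nat -> A, \sum_(i < size p) c i * p`_i = 1.

(* Prime ideals of A(X) = A[X]_{Sigma_A} are identified (standard
   correspondence for localizations) with the prime ideals Q of A[X] with
   Q disjoint from Sigma_A; the map Spec(A(X)) -> Spec(A) is Q |-> Q /\ A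
   (contraction along A -> A[X]).  A is quasi-Pruferian iff this map is
   injective. *)
Definition quasi_pruferian (A : comNzRingType) : Prop :=
  forall Q1 Q2 : {poly A} -> Prop,
    is_prime_ideal Q1 -> (forall p, in_Sigma p -> ~ Q1 p) ->
    is_prime_ideal Q2 -> (forall p, in_Sigma p -> ~ Q2 p) ->
    (forall a : A, Q1 a%:P <-> Q2 a%:P) ->
    forall p, Q1 p <-> Q2 p.

Definition is_subring (S : comPzRingType) (C : S -> Prop) : Prop :=
  C 1 /\ (forall x y, C x -> C y -> C (x - y)) /\ (forall x y, C x -> C y -> C (x * y)).

Definition rmorph_on (S T : comPzRingType) (C : S -> Prop) (g : S -> T) : Prop :=
  g 1 = 1 /\ (forall x y, C x -> C y -> g (x + y) = g x + g y /\ g (x * y) = g x * g y).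

(* Generalised setting: a ring map f restricted to a subring A of R, landing
   in a subring C of S (A -> C, a |-> f a).  For a global ring morphism take
   A, C the full rings; for an inclusion of subrings of S take f = id. *)

Definition integral_on (R S : comNzRingType) (f : R -> S) (A : R -> Prop) (C : S -> Prop) : Prop :=
  forall c, C c -> exists p : {poly R},
    p \is monic /\ (forall i, A p`_i) /\ root (map_poly f p) c.

(* C is a flat A-module (via f): equational criterion of flatness. *)
Definition flat_on (R S : comPzRingType) (f : R -> S) (A : R -> Prop) (C : S -> Prop) : Prop :=
  forall (n : nat) (a : 'I_n -> R) (x : 'I_n -> S),
    (forall i, A (a i)) -> (forall i, C (x i)) ->
    \sum_(i < n) f (a i) * x i = 0 ->
    exists (m : nat) (b : 'I_n -> 'I_m -> R) (y : 'I_m -> S),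
      (forall i j, A (b i j)) /\ (forall j, C (y j)) /\
      (forall i, x i = \sum_(j < m) f (b i j) * y j) /\
      (forall j, \sum_(i < n) a i * b i j = 0).

Definition epi_on (R S : comPzRingType) (f : R -> S) (A : R -> Prop) (C : S -> Prop) : Prop :=
  forall (T : comPzRingType) (g h : S -> T),
    rmorph_on C g -> rmorph_on C h ->
    (forall a, A a -> g (f a) = h (f a)) ->
    forall c, C c -> g c = h c.

Definition flat_epi_on (R S : comPzRingType) (f : R -> S) (A : R -> Prop) (C : S -> Prop) : Prop :=
  flat_on f A C /\ epi_on f A C.

Definition fullset (T : Type) : T -> Prop := fun _ => True.

Definition integral_morphism (R S : comNzRingType) (f : {rmorphism R -> S}) : Prop :=
  integral_on f (@fullset R) (@fullset S).

Definition flat_epimorphism (R S : comNzRingType) (f : {rmorphism R -> S}) : Prop :=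
  flat_epi_on f (@fullset R) (@fullset S).

Definition prufer_sub (S : comNzRingType) (A' : S -> Prop) : Prop :=
  forall C : S -> Prop, is_subring C -> (forall x, A' x -> C x) ->
    flat_epi_on id A' C.

Definition quasi_prufer_ext (R S : comNzRingType) (f : {rmorphism R -> S}) : Prop :=
  injective f /\
  exists A' : S -> Prop,
    is_subring A' /\ (forall r, A' (f r)) /\
    integral_on f (@fullset R) A' /\ prufer_sub A'.

(* Write P[X] for the extension to A[X] of an ideal P of A.  A ring A is quasi-Prüferian
   iff every prime Q of A[X] disjoint from Sigma_A equals (Q ∩ A)[X].

   Let Q be such a prime of S[X] and R quasi-Prüferian.  The contraction
   of Q to R[X] is of the form q[X], so the primes (Q ∩ S)[X] ⊆ Q contract to the same
   prime of R[X]; on the part of S[X] that is integral over R[X] (the polynomials with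
   integral coefficients) incomparability forces them to agree.  For the descent along an
   injective integral map, a prime q of R[X] disjoint from Sigma_R lies in some M[X];
   lying over and going up give primes Q1 ⊆ Q2 of S[X] over q and M[X], incomparability
   gives Q2 ⊆ (Q2 ∩ S)[X], so Q1 is disjoint from Sigma_S and S transfers its property
   to q.

   If A0 ⊆ S is an epimorphism, every A0-linear map from S to an
   S-module is S-linear: the two S-actions on the A0-linear maps are two ring morphisms
   into their (commutative) bicommutant that agree on A0.  Hence the image of S in the
   residue field of a prime Q of S[X] lies in the subfield generated by the image of A0
   (otherwise a linear functional over that subfield killing some s but not 1 would be
   A0-linear and not S-linear).  Clearing denominators, each g in Q is, up to a unit
   modulo Q, a polynomial in Q with coefficients in A0, and when A0 is integral over R
   the integral case applies to it.  Flat epimorphisms (A0 = f(R)) and quasi-Prüfer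
   extensions (A0 = the integral part) are of this kind. *)

From HB Require Import structures.
From mathcomp Require Import all_boot all_order all_algebra.
From mathcomp Require Import boolp classical_sets.
From mathcomp Require Import ring.
Set Implicit Arguments. Unset Strict Implicit. Unset Printing Implicit Defensive.
Import GRing.Theory.
Local Open Scope ring_scope.

Section Ideals.
Variable A : comPzRingType.
Implicit Types (I : A -> Prop) (x y : A).

Lemma ideal0 I : is_ideal I -> I 0.
Proof. by case. Qed.

Lemma idealD I x y : is_ideal I -> I x -> I y -> I (x + y).
Proof. by case=> _ [+ _]; apply. Qed.

Lemma ideal_mull I r x : is_ideal I -> I x -> I (r * x).
Proof. by case=> _ [_]; apply. Qed.

Lemma ideal_mulr I r x : is_ideal I -> I x -> I (x * r).
Proof. by rewrite mulrC; apply: ideal_mull. Qed.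

Lemma idealN I x : is_ideal I -> I x -> I (- x).
Proof. by rewrite -mulN1r; apply: ideal_mull. Qed.

Lemma idealB I x y : is_ideal I -> I x -> I y -> I (x - y).
Proof. by move=> hI Ix Iy; apply: idealD (idealN _ _). Qed.

Lemma ideal_sum I (J : Type) (r : seq J) (P : pred J) (F : J -> A) :
  is_ideal I -> (forall j, P j -> I (F j)) -> I (\sum_(j <- r | P j) F j).
Proof.
move=> hI IF; elim/big_rec: _ => [|j x Pj Ix]; first exact: ideal0.
exact: idealD (IF _ Pj) Ix.
Qed.

Lemma prime_idealX I x n : is_prime_ideal I -> I (x ^+ n) -> I x.
Proof.
move=> [_ [I1 IM]]; elim: n => [|n IHn]; first by rewrite expr0 => /I1.
by rewrite exprS => /IM [] // /IHn.
Qed.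

Lemma prime_ideal_comap (B : comPzRingType) (phi : {rmorphism B -> A}) I :
  is_prime_ideal I -> is_prime_ideal (I \o phi).
Proof.
move=> [hI [I1 IM]]; split; last split => /=.
- split; first by rewrite /= rmorph0; apply: ideal0.
  by split=> x y * /=; rewrite ?rmorphD ?rmorphM; [apply: idealD | apply: ideal_mull].
- by rewrite rmorph1.
- by move=> x y; rewrite rmorphM => /IM.
Qed.

Lemma ideal_zero : is_ideal (fun x : A => x = 0).
Proof. by split=> //; split=> [x y -> ->|r x ->]; rewrite ?addr0 ?mulr0. Qed.

End Ideals.

Section Subring.
Variables (S : comPzRingType) (C : S -> Prop).
Hypothesis hC : is_subring C.

Lemma subring1 : C 1. Proof. by case: hC. Qed.

Lemma subringB x y : C x -> C y -> C (x - y). Proof. by case: hC => _ [CB _]; apply: CB. Qed.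

Lemma subringM x y : C x -> C y -> C (x * y). Proof. by case: hC => _ [_ CM]; apply: CM. Qed.

Lemma subring0 : C 0. Proof. by rewrite -(subrr 1); apply: subringB subring1 subring1. Qed.

Lemma subringN x : C x -> C (- x). Proof. by rewrite -sub0r; apply: subringB subring0. Qed.

Lemma subringD x y : C x -> C y -> C (x + y).
Proof. by move=> Cx Cy; rewrite -[y]opprK; apply: subringB (subringN Cy). Qed.

End Subring.

Lemma prime_ideal_zero (D : idomainType) : is_prime_ideal (fun x : D => x = 0).
Proof.
split; [exact: ideal_zero | split; first by apply/eqP; rewrite oner_eq0].
by move=> x y /eqP; rewrite mulf_eq0 => /orP[] /eqP; [left | right].
Qed.

Section ResidueField.
Local Open Scope quotient_scope.
Variables (B : comNzRingType) (Q : B -> Prop).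
Hypothesis hQ : is_prime_ideal Q.

Definition prime_pred : {pred B} := fun x => `[< Q x >].

Lemma prime_pred_idealr : idealr_closed prime_pred.
Proof.
case: hQ => hI [Q1 _]; split; [exact/asboolP/(ideal0 hI) | exact/asboolP |].
move=> a u v /asboolP Qu /asboolP Qv; apply/asboolP.
by apply: idealD (ideal_mull _ _ Qu) Qv.
Qed.

HB.instance Definition _ := isIdealr.Build B prime_pred prime_pred_idealr.

Lemma prime_pred_prime : prime_idealr_closed prime_pred.
Proof.
by case: hQ => _ [_ QM] u v /asboolP /QM [] Qw; apply/orP; [left | right]; apply/asboolP.
Qed.

HB.instance Definition _ := isPrimeIdealrClosed.Build B prime_pred prime_pred_prime.

Definition quot_domain := {ideal_quot prime_pred}.
HB.instance Definition _ := GRing.ComNzRing.on quot_domain.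

(* The quotient has no decidable unit predicate, so inverses are chosen classically. *)
Definition quot_unit : {pred quot_domain} := fun x => `[< exists y, y * x = 1 >].

Definition quot_inv (x : quot_domain) : quot_domain :=
  if pselect (exists y, y * x = 1) is left h then projT1 (cid h) else x.

Lemma quot_mulVr : {in quot_unit, left_inverse 1 quot_inv *%R}.
Proof.
by move=> x /asboolP ux; rewrite /quot_inv; case: pselect => // h; apply: (projT2 (cid h)).
Qed.

Lemma quot_unitPl (x y : quot_domain) : y * x = 1 -> quot_unit x.
Proof. by move=> yx; apply/asboolP; exists y. Qed.

Lemma quot_inv_out : {in [predC quot_unit], quot_inv =1 id}.
Proof. by move=> x /asboolPn; rewrite /quot_inv; case: pselect. Qed.

HB.instance Definition _ :=
  GRing.ComNzRing_hasMulInverse.Build quot_domain quot_mulVr quot_unitPl quot_inv_out.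

Lemma quot_domain_axiom : GRing.integral_domain_axiom quot_domain.
Proof. exact: Quotient.rquot_IdomainAxiom. Qed.

HB.instance Definition _ := GRing.ComUnitRing_isIntegral.Build quot_domain quot_domain_axiom.

Definition residue_field := {fraction quot_domain}.
HB.instance Definition _ := GRing.Field.on residue_field.

Definition res : B -> residue_field := @tofrac quot_domain \o \pi_quot_domain.
HB.instance Definition _ := GRing.RMorphism.on res.

Lemma res_eq0 x : res x = 0 <-> Q x.
Proof.
have := Quotient.idealrBE prime_pred x 0; rewrite subr0 rmorph0 => piE.
rewrite /res /=; split => [/eqP|Qx]; first by rewrite tofrac_eq0 -piE => /asboolP.
by apply/eqP; rewrite tofrac_eq0 -piE; apply/asboolP.
Qed.

End ResidueField.

Section PolyIdeal.
Variable A : comNzRingType.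
Implicit Types (P : A -> Prop) (p g : {poly A}).

Definition poly_ideal P : {poly A} -> Prop := fun g => forall i, P g`_i.

Definition sigma_free (Q : {poly A} -> Prop) := forall p, in_Sigma p -> ~ Q p.

(* For an ideal [Q], [coef_closed Q] says [Q = (Q ∩ A)[X]], i.e. [Q = poly_ideal (Q \o polyC)]. *)
Definition coef_closed (Q : {poly A} -> Prop) := forall g, Q g -> forall i, Q (g`_i)%:P.

Lemma poly_idealE P (hP : is_prime_ideal P) g :
  poly_ideal P g <-> map_poly (res hP) g = 0.
Proof.
split=> [Pg | /polyP g0 i]; first by apply/polyP => i; rewrite coef_map coef0; apply/res_eq0.
by apply/(res_eq0 hP); move: (g0 i); rewrite coef_map coef0.
Qed.

Lemma prime_poly_ideal P : is_prime_ideal P -> is_prime_ideal (poly_ideal P).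
Proof.
move=> hP; have -> : poly_ideal P = (fun x => x = 0) \o map_poly (res hP).
  by apply/funext => g; apply/propext; apply: poly_idealE.
exact: prime_ideal_comap (prime_ideal_zero _).
Qed.

Lemma poly_idealC P a : is_ideal P -> poly_ideal P a%:P <-> P a.
Proof.
by move=> hP; split=> [/(_ 0%N) | Pa i]; rewrite coefC //; case: eqP => // _; apply: ideal0.
Qed.

Lemma poly_sumC g : g = \sum_(i < size g) (g`_i)%:P * 'X^i.
Proof. by rewrite -{1}[g]coefK poly_def; apply: eq_bigr => i _; rewrite mul_polyC. Qed.

Lemma poly_ideal_sub P (Q : {poly A} -> Prop) :
  is_ideal Q -> (forall a, P a -> Q a%:P) -> forall g, poly_ideal P g -> Q g.
Proof.
move=> hQ PQ g Pg; rewrite [g]poly_sumC; apply: ideal_sum => // i _.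
by apply: ideal_mulr => //; apply: PQ.
Qed.

Lemma sum_coef_widen (c : nat -> A) p n : (size p <= n)%N ->
  \sum_(i < n) c i * p`_i = \sum_(i < size p) c i * p`_i.
Proof.
move=> le; rewrite [RHS](big_ord_widen n (fun i => c i * p`_i) le) [RHS]big_mkcond /=.
by apply: eq_bigr => i _; case: ltnP => // /(nth_default 0) ->; rewrite mulr0.
Qed.

Definition content_ideal p (r : A) := exists c : nat -> A, \sum_(i < size p) c i * p`_i = r.

Lemma content_idealP p r :
  content_ideal p r <-> exists n (c : nat -> A), \sum_(i < n) c i * p`_i = r.
Proof.
split=> [[c cr] | [n [c cr]]]; first by exists (size p), c.
pose c' i := if (i < n)%N then c i else 0; exists c'.
rewrite -(sum_coef_widen c' (leq_maxr n (size p))) -cr.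
rewrite [RHS](big_ord_widen _ (fun i => c i * p`_i) (leq_maxl n (size p))) [RHS]big_mkcond /=.
by apply: eq_bigr => i _; rewrite /c'; case: ifP; rewrite ?mul0r.
Qed.

Lemma sigma_free_poly_ideal P : is_prime_ideal P -> sigma_free (poly_ideal P).
Proof.
move=> [hI [P1 _]] p [c c1] Pp; apply: P1; rewrite -c1.
by apply: ideal_sum => // i _; apply: ideal_mull.
Qed.

Lemma quasi_pruferianP :
  quasi_pruferian A <->
  forall Q, is_prime_ideal Q -> sigma_free Q -> coef_closed Q.
Proof.
split=> [qpA Q hQ QS g Qg i | cc Q1 Q2 hQ1 QS1 hQ2 QS2 Q12 g].
  have hP := prime_ideal_comap polyC hQ.
  have QP a : Q a%:P <-> poly_ideal (Q \o polyC) a%:P := iff_sym (poly_idealC a hP.1).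
  by case: (qpA _ _ hQ QS (prime_poly_ideal hP) (sigma_free_poly_ideal hP) QP g) => /(_ Qg) /(_ i).
have coefQ (Q Q' : {poly A} -> Prop) : is_prime_ideal Q -> sigma_free Q ->
    is_prime_ideal Q' -> (forall a, Q a%:P -> Q' a%:P) -> Q g -> Q' g.
  move=> hQ QS [hQ' _] QQ' Qg; apply: (poly_ideal_sub (P := Q \o polyC)) => // i.
  exact: cc.
split; apply: coefQ => // a; apply Q12.
Qed.

End PolyIdeal.

Section SigmaMap.
Variables (A S : comNzRingType) (f : {rmorphism A -> S}).

Lemma in_Sigma_map (p : {poly A}) :
  in_Sigma p -> in_Sigma (map_poly f p).
Proof.
move=> [c c1]; exists (f \o c).
rewrite -(sum_coef_widen _ (size_poly _ _ : (size (map_poly f p) <= size p)%N)).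
rewrite -(rmorph1 f) -c1 rmorph_sum.
by apply: eq_bigr => i _; rewrite coef_map rmorphM.
Qed.

Lemma sigma_free_comap (Q : {poly S} -> Prop) :
  sigma_free Q -> sigma_free (Q \o map_poly f).
Proof. by move=> QS p /in_Sigma_map; apply: QS. Qed.

End SigmaMap.

Lemma zorn_above (T : Type) (P : (T -> Prop) -> Prop) (W0 : T -> Prop) :
  (exists x, W0 x) -> P W0 ->
  (forall F : (T -> Prop) -> Prop,
     (forall X, F X -> P X /\ (forall x, W0 x -> X x)) -> (exists X, F X) ->
     (forall X Y, F X -> F Y -> (forall x, X x -> Y x) \/ (forall x, Y x -> X x)) ->
     P (fun x => exists X, F X /\ X x)) ->
  exists W, [/\ P W, (forall x, W0 x -> W x) &
    forall V, P V -> (forall x, W x -> V x) -> forall x, V x -> W x].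
Proof.
move=> [x0 Wx0] PW0 chainP.
(* [set0] is admitted so that the empty chain has an upper bound. *)
pose P' : set (set T) := fun X => X = set0 \/ P X /\ (forall x, W0 x -> X x).
have [F FP Ftot|W [[W_0|[PW W0W]] Wmax]] := @Zorn_bigcup T P'.
- have [[X0 [FX0 [x X0x]]]|Fempty] := pselect (exists X, F X /\ exists x, X x); last first.
    left; apply/funext => y; apply/propext; split=> // -[X FX Xy].
    by apply: Fempty; exists X; split=> //; exists y.
  pose F' X := F X /\ P X /\ (forall x, W0 x -> X x).
  have F'E X : F X -> (exists x, X x) -> F' X.
    by move=> FX [y Xy]; split=> //; case: (FP X FX) => // X_0; rewrite X_0 in Xy.
  have -> : bigcup F (fun X => X) = (fun x => exists X, F' X /\ X x).
    apply/funext => y; apply/propext; split=> [[X FX Xy]|[X [[FX _] Xy]]].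
      by exists X; split=> //; apply: F'E => //; exists y.
    by exists X.
  have F'X0 : F' X0 by apply: F'E => //; exists x.
  right; split.
    apply: chainP => [X [_ //]| |X Y [FX _] [FY _]]; [by exists X0 | exact: Ftot].
  by move=> y /F'X0.2.2 X0y; exists X0.
- by exfalso; apply: (Wmax W0); [rewrite W_0; split=> // /(_ x0 Wx0) | right].
exists W; split=> // V PV WV x Vx; apply: contrapT => Wx.
apply: (Wmax V); last by right; split=> // y /W0W /WV.
by split=> // VW; apply: Wx (VW x Vx).
Qed.

Section PrimeAvoidance.
Variables (B : comNzRingType) (J U : B -> Prop).
Hypotheses (hJ : is_ideal J) (U1 : U 1) (UM : forall x y, U x -> U y -> U (x * y)).
Hypothesis JU : forall x, J x -> ~ U x.

Definition avoiding_ideal (I : B -> Prop) := is_ideal I /\ forall x, I x -> ~ U x.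

Lemma max_avoiding_ideal : exists Q, [/\ avoiding_ideal Q, (forall x, J x -> Q x) &
  forall I, avoiding_ideal I -> (forall x, Q x -> I x) -> forall x, I x -> Q x].
Proof.
apply: zorn_above => [|//|F FP [X0 FX0] Ftot]; first by exists 0; apply: ideal0.
have FI X : F X -> is_ideal X by move=> /FP [[]].
have chain_add X Y x y : F X -> F Y -> X x -> Y y ->
    exists Z, F Z /\ Z (x + y).
  move=> FX FY Xx Yy; case: (Ftot X Y FX FY) => XY.
    by exists Y; split=> //; apply: idealD (FI Y FY) (XY x Xx) Yy.
  by exists X; split=> //; apply: idealD (FI X FX) Xx (XY y Yy).
split; last by move=> x [X [FX Xx]]; case: (FP X FX) => -[_ XU] _; apply: XU.
split; first by exists X0; split=> //; apply: ideal0 (FI X0 FX0).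
split=> [x y [X [FX Xx]] [Y [FY Yy]] | r x [X [FX Xx]]]; first exact: chain_add FX FY Xx Yy.
by exists X; split=> //; apply: ideal_mull (FI X FX) Xx.
Qed.

Lemma max_avoiding_idealP Q : avoiding_ideal Q ->
  (forall I, avoiding_ideal I -> (forall x, Q x -> I x) -> forall x, I x -> Q x) ->
  forall x, ~ Q x -> exists q b, Q q /\ U (q + b * x).
Proof.
move=> [hQ QU] Qmax x Qx; apply: contrapT => noU.
pose I y := exists q b, Q q /\ y = q + b * x.
apply: Qx; apply: (Qmax I); last by exists 0, 1; rewrite add0r mul1r; split=> //; apply: ideal0.
- split=> [|y [q [b [Qq ->]]] Uy]; last by apply: noU; exists q, b.
  split; first by exists 0, 0; rewrite mul0r addr0; split=> //; apply: ideal0.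
  split=> [y z [q [b [Qq ->]]] [q' [b' [Qq' ->]]] | r y [q [b [Qq ->]]]].
    by exists (q + q'), (b + b'); rewrite mulrDl addrACA; split=> //; apply: idealD.
  by exists (r * q), (r * b); rewrite mulrDr mulrA; split=> //; apply: ideal_mull.
- by move=> y Qy; exists y, 0; rewrite mul0r addr0.
Qed.

Lemma prime_avoiding : exists Q, [/\ is_prime_ideal Q, (forall x, J x -> Q x),
  (forall x, Q x -> ~ U x) & forall x, ~ Q x -> exists q b, Q q /\ U (q + b * x)].
Proof.
have [Q [[hQ QU] JQ Qmax]] := max_avoiding_ideal.
have hit := max_avoiding_idealP (conj hQ QU) Qmax.
exists Q; split=> //; split=> //; split=> [/QU|x y Qxy]; first exact.
have [Qx|/hit [q [b [Qq Uqb]]]] := pselect (Q x); first by left.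
have [Qy|/hit [q' [b' [Qq' Uqb']]]] := pselect (Q y); first by right.
case: (QU _ _ (UM Uqb Uqb')).
have -> : (q + b * x) * (q' + b' * y) = (q + b * x) * q' + (q * (b' * y) + (b * b') * (x * y)).
  by ring.
apply: idealD => //; first exact: ideal_mull.
by apply: idealD => //; [apply: ideal_mulr | apply: ideal_mull].
Qed.

End PrimeAvoidance.

Section Integral.
Variables (A B : comNzRingType) (phi : {rmorphism A -> B}).

Lemma integral_incomparable (I Q : B -> Prop) b :
  is_prime_ideal I -> is_ideal Q -> (forall x, I x -> Q x) ->
  (forall a, Q (phi a) -> I (phi a)) -> integralOver phi b -> Q b -> I b.
Proof.
move=> hI hQ IQ QI [p mon_p pb0] Qb; apply: contrapT => Ib.
suff no_rel n (a : nat -> A) : ~ I (b ^+ n + \sum_(i < n) phi (a i) * b ^+ i).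
  have mon_pphi : map_poly phi p \is monic by apply: monic_map.
  apply: (no_rel (size (map_poly phi p)).-1 (fun i => p`_i)).
  move: pb0; rewrite /root horner_coef (polySpred (monic_neq0 mon_pphi)) big_ord_recr /=.
  rewrite -lead_coefE (eqP mon_pphi) mul1r addrC => /eqP.
  under eq_bigr do rewrite coef_map.
  by move=> ->; apply: ideal0 hI.1.
elim: n a => [|n IHn] a; first by rewrite big_ord0 addr0 expr0; case: hI => _ [].
rewrite big_ord_recl /= expr0 mulr1.
set r := b ^+ n + \sum_(i < n) phi (a i.+1) * b ^+ i.
have -> : b ^+ n.+1 + (phi (a 0%N) + \sum_(i < n) phi (a (bump 0 i)) * b ^+ bump 0 i) =
    phi (a 0%N) + b * r.
  rewrite /r mulrDr mulr_sumr exprS addrCA; congr (_ + (_ + _)).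
  by apply: eq_bigr => i _; rewrite /bump /= add1n exprS mulrCA.
move=> Ia0br.
have Ia0 : I (phi (a 0%N)).
  apply: QI; rewrite -(addrK (b * r) (phi _)).
  by apply: idealB (IQ _ Ia0br) (ideal_mulr _ hQ Qb).
have : I (b * r).
  by rewrite -(addKr (phi (a 0%N)) (b * r)); apply: idealD (idealN _ _) Ia0br; case: hI.
by case/hI.2.2 => // /(IHn (fun i => a i.+1)).
Qed.

Lemma contract_integral_mul (Q : B -> Prop) (p : A -> Prop) a s c q :
  is_ideal Q -> is_prime_ideal p -> (forall x, Q (phi x) -> p x) ->
  integralOver phi c -> p a -> Q q -> phi s = q + c * phi a -> p s.
Proof.
move=> hQ hp Qp [pc mon_pc pcc] pa Qq sE.
have [hpI [_ pM]] := hp.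
pose n := (size pc).-1.
have size_pc : size pc = n.+1 by rewrite /n (polySpred (monic_neq0 mon_pc)).
pose e i := pc`_i * a ^+ (n - i).
(* homogenising the integral relation of [c] by [phi a] *)
have rel : \sum_(i < n.+1) phi (e i) * (phi s - q) ^+ i = 0.
  have -> : phi s - q = c * phi a by rewrite sE addrC addKr.
  transitivity (phi a ^+ n * (map_poly phi pc).[c]); last by rewrite (eqP pcc) mulr0.
  rewrite horner_coef mulr_sumr size_map_poly_id0; last by rewrite (eqP mon_pc) rmorph1 oner_neq0.
  rewrite size_pc; apply: eq_bigr => i _.
  rewrite /e rmorphM rmorphXn coef_map exprMn.
  have le : (i <= n)%N by rewrite -ltnS.
  have -> : phi a ^+ n = phi a ^+ (n - i) * phi a ^+ i by rewrite -exprD subnK.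
  ring.
have : p (\sum_(i < n.+1) e i * s ^+ i).
  apply: Qp; rewrite rmorph_sum -[X in Q X]subr0 -{2}rel -sumrB.
  apply: ideal_sum => // i _; rewrite rmorphM rmorphXn -mulrBr subrXX opprB addrC subrK.
  by apply: ideal_mull => //; apply: ideal_mulr.
have e_n : e n = 1 by rewrite /e subnn expr0 mulr1; apply: (eqP mon_pc).
rewrite big_ord_recr /= e_n mul1r.
have pe : p (\sum_(i < n) e i * s ^+ i).
  apply: ideal_sum => // i _; rewrite /e -mulrA mulrC -mulrA.
  have n_i : (0 < n - i)%N by rewrite subn_gt0.
  by rewrite -(prednK n_i) exprS; apply: ideal_mulr => //; apply: ideal_mulr.
move=> ps; apply: (prime_idealX (n := n)) => //.
by rewrite -(addKr (\sum_(i < n) e i * s ^+ i) (s ^+ n)); apply: idealD (idealN _ _) ps.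
Qed.

Lemma lying_over (J : B -> Prop) (p : A -> Prop) :
  (forall b, integralOver phi b) -> is_ideal J -> is_prime_ideal p ->
  (forall a, J (phi a) -> p a) ->
  exists Q, [/\ is_prime_ideal Q, (forall x, J x -> Q x) & forall a, Q (phi a) <-> p a].
Proof.
move=> phi_int hJ hp Jp; have [hpI [p1 pM]] := hp.
pose U y := exists2 a, ~ p a & y = phi a.
have U1 : U 1 by exists 1; rewrite ?rmorph1.
have UM x y : U x -> U y -> U (x * y).
  by move=> [a pa ->] [a' pa' ->]; exists (a * a'); [case/pM | rewrite rmorphM].
have JU x : J x -> ~ U x by move=> Jx [a pa xE]; apply/pa/Jp; rewrite -xE.
have [Q [hQ JQ QU hit]] := prime_avoiding hJ U1 UM JU.
have Qp a : Q (phi a) -> p a by move=> Qa; apply: contrapT => pa; apply: QU Qa _; exists a.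
exists Q; split=> // a; split=> [|pa]; first exact: Qp.
apply: contrapT => /hit [q [c [Qq [s ps sE]]]]; apply: ps.
by apply: (contract_integral_mul hQ.1 hp Qp (phi_int c) pa Qq); rewrite sE.
Qed.

End Integral.

Lemma integral_on_integral (R S : comNzRingType) (f : R -> S) A (C : S -> Prop) c :
  integral_on f A C -> C c -> integralOver f c.
Proof. by move=> fint /fint [p [mon_p [_ pc]]]; exists p. Qed.

Section IntegralPoly.
Variables (R S : comNzRingType) (f : {rmorphism R -> S}).

Lemma integral_polyC s : integralOver f s -> integralOver (map_poly f) s%:P.
Proof.
move=> /(integral_rmorph polyC) [p mon_p ps]; exists p^:P; first exact: monic_map.
by rewrite -map_poly_comp (eq_map_poly (map_polyC f)).
Qed.

Lemma integral_poly_coef (g : {poly S}) :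
  (forall i, integralOver f g`_i) -> integralOver (map_poly f) g.
Proof.
move=> gint; rewrite -[g]comp_polyXr; apply: integral_horner.
  by apply/integral_poly => i; rewrite coef_map; apply: integral_polyC.
by rewrite -(map_polyX f); apply: integral_id.
Qed.

Lemma coef_closed_integral (Q : {poly S} -> Prop) (g : {poly S}) :
  is_prime_ideal Q -> (forall a, Q (map_poly f a) -> forall j, Q (f a`_j)%:P) ->
  Q g -> (forall i, integralOver f g`_i) -> forall i, Q (g`_i)%:P.
Proof.
move=> hQ Qf Qg gint; have hP := prime_ideal_comap polyC hQ.
suff : poly_ideal (Q \o polyC) g by [].
apply: (integral_incomparable (phi := map_poly f) (Q := Q)) => //.
- exact: prime_poly_ideal.
- exact: hQ.1.
- by apply: poly_ideal_sub; first exact: hQ.1.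
- by move=> a /Qf Qa j; rewrite /= coef_map; apply: Qa.
- exact: integral_poly_coef.
Qed.

Lemma quasi_pruferian_coef_integral (Q : {poly S} -> Prop) (g : {poly S}) :
  quasi_pruferian R -> is_prime_ideal Q -> sigma_free Q -> Q g ->
  (forall i, integralOver f g`_i) -> forall i, Q (g`_i)%:P.
Proof.
move=> /quasi_pruferianP qpR hQ QS; apply: coef_closed_integral => // a Qa j.
rewrite -map_polyC.
exact: qpR _ (prime_ideal_comap (map_poly f) hQ) (sigma_free_comap QS) _ Qa j.
Qed.

Lemma quasi_pruferian_integral :
  quasi_pruferian R -> integral_morphism f -> quasi_pruferian S.
Proof.
move=> qpR fint; apply/quasi_pruferianP => Q hQ QS g Qg.
by apply: quasi_pruferian_coef_integral => // i; apply: integral_on_integral fint _.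
Qed.

End IntegralPoly.

Lemma exists_prime_over_coefs (A : comNzRingType) (q : {poly A} -> Prop) :
  is_ideal q -> sigma_free q ->
  exists2 M, is_prime_ideal M & forall h, q h -> forall i, M h`_i.
Proof.
move=> hq qS; pose I r := exists2 h, q h & content_ideal h r.
have hI : is_ideal I.
  split; first by exists 0; [apply: ideal0 | exists (fun _ => 0); rewrite size_poly0 big_ord0].
  split=> [_ _ [h1 qh1 [c1 <-]] [h2 qh2 [c2 <-]] | r _ [h qh [c <-]]]; last first.
    exists h => //; exists (fun i => r * c i).
    by rewrite mulr_sumr; apply: eq_bigr => i _; rewrite mulrA.
  pose m := size h1; exists (h1 + 'X^m * h2); first by apply: idealD qh1 (ideal_mull _ hq qh2).
  apply/content_idealP; exists (m + size h2)%N, (fun i => if (i < m)%N then c1 i else c2 (i - m)%N).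
  rewrite big_split_ord /=; congr (_ + _); apply: eq_bigr => i _.
    by rewrite ltn_ord coefD coefXnM ltn_ord addr0.
  rewrite ltnNge leq_addr /= addKn coefD coefXnM ltnNge leq_addr /= addKn.
  by rewrite [h1`__]nth_default ?add0r ?leq_addr.
have IU x : I x -> x <> 1 by move=> [h qh hx] x1; subst x; apply: (qS h).
have UM (x y : A) : x = 1 -> y = 1 -> x * y = 1 by move=> -> ->; rewrite mulr1.
have [M [hM IM _ _]] := prime_avoiding hI (erefl 1) UM IU.
exists M => // h qh i; apply: IM; exists h => //.
apply/content_idealP; exists i.+1, (fun j => (j == i)%:R).
by rewrite big_ord_recr /= eqxx mul1r big1 ?add0r // => j _; rewrite ltn_eqF ?mul0r.
Qed.

Lemma quasi_pruferian_integral_inj (R S : comNzRingType) (f : {rmorphism R -> S}) :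
  quasi_pruferian S -> injective f -> integral_morphism f -> quasi_pruferian R.
Proof.
move=> /quasi_pruferianP qpS finj fint; apply/quasi_pruferianP => q hq qS g qg i.
have fint' (s : S) : integralOver f s by apply: integral_on_integral fint _.
have Xint (b : {poly S}) : integralOver (map_poly f) b by apply: integral_poly_coef.
have [M hM qM] := exists_prime_over_coefs hq.1 qS.
have fa0 a : map_poly f a = 0 -> q a.
  rewrite -(rmorph0 (map_poly f)) => /(map_inj_poly finj (rmorph0 f)) ->.
  exact: ideal0 hq.1.
have [Q1 [hQ1 _ Q1q]] := lying_over Xint (ideal_zero _) hq fa0.
have [Q2 [hQ2 Q12 Q2M]] :=
  lying_over Xint hQ1.1 (prime_poly_ideal hM) (fun a Q1a => qM a ((Q1q a).1 Q1a)).
have Q2f a : Q2 (map_poly f a) -> forall j, Q2 (f a`_j)%:P.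
  move=> /Q2M Ma j; rewrite -map_polyC; apply/Q2M/poly_idealC; [exact: hM.1 | exact: Ma].
have Q1S : sigma_free Q1.
  move=> p Sp /Q12 Q2p; apply: (sigma_free_poly_ideal (prime_ideal_comap polyC hQ2) Sp).
  exact: coef_closed_integral hQ2 Q2f Q2p (fun j => fint' _).
by have := qpS Q1 hQ1 Q1S _ ((Q1q g).2 qg) i; rewrite coef_map -map_polyC => /Q1q.
Qed.

Section Bicommutant.
Variables (S L : comNzRingType) (iota : {rmorphism S -> L}) (A0 : S -> Prop).

Definition linear_over (phi : S -> L) :=
  (forall x y, phi (x + y) = phi x + phi y) /\
  (forall a t, A0 a -> phi (a * t) = iota a * phi t).

Record lin_map := LinMap { lin_fun :> S -> L; lin_funP : linear_over lin_fun }.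

Lemma lin_map_eq (u v : lin_map) : lin_fun u =1 lin_fun v -> u = v.
Proof.
case: u v => [f fP] [g gP] /funext /= fg; move: fP gP; rewrite fg => fP gP.
by rewrite (Prop_irrelevance fP gP).
Qed.

HB.instance Definition _ := gen_eqMixin lin_map.
HB.instance Definition _ := gen_choiceMixin lin_map.

Lemma linear_over0 : linear_over (fun _ => 0).
Proof. by split=> *; rewrite ?addr0 ?mulr0. Qed.

Lemma linear_overD (u v : lin_map) : linear_over (fun s => u s + v s).
Proof.
case: u v => [f [fD fZ]] [g [gD gZ]]; split=> /= [x y | a t Aa].
  by rewrite fD gD addrACA.
by rewrite fZ // gZ // mulrDr.
Qed.

Lemma linear_overN (u : lin_map) : linear_over (fun s => - u s).
Proof. by case: u => f [fD fZ]; split=> /= [x y | a t Aa]; rewrite ?fD ?opprD // fZ // mulrN. Qed.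

Definition lin_add u v := LinMap (linear_overD u v).
Definition lin_opp u := LinMap (linear_overN u).

Lemma lin_addA : associative lin_add.
Proof. by move=> u v w; apply: lin_map_eq => s /=; rewrite addrA. Qed.
Lemma lin_addC : commutative lin_add.
Proof. by move=> u v; apply: lin_map_eq => s /=; rewrite addrC. Qed.
Lemma lin_add0 : left_id (LinMap linear_over0) lin_add.
Proof. by move=> u; apply: lin_map_eq => s /=; rewrite add0r. Qed.
Lemma lin_addN : left_inverse (LinMap linear_over0) lin_opp lin_add.
Proof. by move=> u; apply: lin_map_eq => s /=; rewrite addNr. Qed.

HB.instance Definition _ := GRing.isZmodule.Build lin_map lin_addA lin_addC lin_add0 lin_addN.

Lemma linear_over_lmul s (u : lin_map) : linear_over (fun t => iota s * u t).
Proof.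
case: u => f [fD fZ]; split=> /= [x y | a t Aa]; first by rewrite fD mulrDr.
by rewrite (fZ _ _ Aa) mulrCA.
Qed.

Lemma linear_over_rmul s (u : lin_map) : linear_over (fun t => u (s * t)).
Proof.
case: u => f [fD fZ]; split=> /= [x y | a t Aa]; first by rewrite mulrDr fD.
by rewrite mulrCA (fZ _ _ Aa).
Qed.

Definition lmul s u := LinMap (linear_over_lmul s u).
Definition rmul s u := LinMap (linear_over_rmul s u).

Definition additive_op (v : lin_map -> lin_map) := forall x y, v (x + y) = v x + v y.

Definition commutant (v : lin_map -> lin_map) := [/\ additive_op v,
  forall s u, v (lmul s u) = lmul s (v u) & forall s u, v (rmul s u) = rmul s (v u)].

Definition bicommutant (w : lin_map -> lin_map) :=
  additive_op w /\ forall v, commutant v -> forall u, w (v u) = v (w u).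

Lemma additive_op0 v : additive_op v -> v 0 = 0.
Proof. by move=> vD; apply: (addrI (v 0)); rewrite -vD !addr0. Qed.

Lemma additive_opN v x : additive_op v -> v (- x) = - v x.
Proof. by move=> vD; apply: (addrI (v x)); rewrite -vD !subrr additive_op0. Qed.

Lemma commutant_lmul s : commutant (lmul s).
Proof.
split=> [x y | s' u | s' u]; apply: lin_map_eq => t /=; rewrite ?mulrDr //.
by rewrite mulrCA.
Qed.

Lemma commutant_rmul s : commutant (rmul s).
Proof.
split=> [x y | s' u | s' u]; apply: lin_map_eq => t //=.
by rewrite mulrCA.
Qed.

Record bicomm := Bicomm { bc_fun :> lin_map -> lin_map; bc_funP : bicommutant bc_fun }.

Lemma bicomm_eq (w w' : bicomm) : bc_fun w =1 bc_fun w' -> w = w'.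
Proof.
case: w w' => [f fP] [g gP] /funext /= fg; move: fP gP; rewrite fg => fP gP.
by rewrite (Prop_irrelevance fP gP).
Qed.

HB.instance Definition _ := gen_eqMixin bicomm.
HB.instance Definition _ := gen_choiceMixin bicomm.

Lemma bicommutant0 : bicommutant (fun _ => 0).
Proof. by split=> [x y | v [vD _ _] u]; rewrite ?addr0 ?additive_op0. Qed.

Lemma bicommutantD (w w' : bicomm) : bicommutant (fun u => w u + w' u).
Proof.
case: w w' => [f [fD fC]] [g [gD gC]]; split=> /= [x y | v cv u].
  by rewrite fD gD addrACA.
by rewrite fC // gC //; case: cv => vD _ _; rewrite vD.
Qed.

Lemma bicommutantN (w : bicomm) : bicommutant (fun u => - w u).
Proof.
case: w => f [fD fC]; split=> /= [x y | v cv u]; first by rewrite fD opprD.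
by rewrite fC //; case: cv => vD _ _; rewrite additive_opN.
Qed.

Definition bc_add w w' := Bicomm (bicommutantD w w').
Definition bc_opp w := Bicomm (bicommutantN w).

Lemma bc_addA : associative bc_add.
Proof. by move=> w1 w2 w3; apply: bicomm_eq => u /=; rewrite addrA. Qed.
Lemma bc_addC : commutative bc_add.
Proof. by move=> w1 w2; apply: bicomm_eq => u /=; rewrite addrC. Qed.
Lemma bc_add0 : left_id (Bicomm bicommutant0) bc_add.
Proof. by move=> w; apply: bicomm_eq => u /=; rewrite add0r. Qed.
Lemma bc_addN : left_inverse (Bicomm bicommutant0) bc_opp bc_add.
Proof. by move=> w; apply: bicomm_eq => u /=; rewrite addNr. Qed.

HB.instance Definition _ := GRing.isZmodule.Build bicomm bc_addA bc_addC bc_add0 bc_addN.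

Lemma bicommutant1 : bicommutant id.
Proof. by []. Qed.

Lemma bicommutantM (w w' : bicomm) : bicommutant (fun u => w (w' u)).
Proof.
case: w w' => [f [fD fC]] [g [gD gC]]; split=> /= [x y | v cv u]; first by rewrite gD fD.
by rewrite gC // fC.
Qed.

Definition bc_mul w w' := Bicomm (bicommutantM w w').

Lemma bicomm_commutant (w : bicomm) : commutant w.
Proof.
case: w => f [fD fC] /=; split=> // s u; rewrite fC //.
  exact: commutant_lmul.
exact: commutant_rmul.
Qed.

Lemma bc_mulA : associative bc_mul.
Proof. by move=> w1 w2 w3; apply: bicomm_eq. Qed.
Lemma bc_mulC : commutative bc_mul.
Proof.
move=> [f [fD fC]] w; apply: bicomm_eq => u /=.
by rewrite fC //; apply: bicomm_commutant.
Qed.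
Lemma bc_mul1 : left_id (Bicomm bicommutant1) bc_mul.
Proof. by move=> w; apply: bicomm_eq. Qed.
Lemma bc_mulDl : left_distributive bc_mul bc_add.
Proof. by move=> w1 w2 w3; apply: bicomm_eq. Qed.

HB.instance Definition _ :=
  GRing.Zmodule_isComPzRing.Build bicomm bc_mulA bc_mulC bc_mul1 bc_mulDl.

Lemma bicommutant_lmul s : bicommutant (lmul s).
Proof. by split=> [|v [_ vl _] u]; [case: (commutant_lmul s) | rewrite vl]. Qed.

Lemma bicommutant_rmul s : bicommutant (rmul s).
Proof. by split=> [|v [_ _ vr] u]; [case: (commutant_rmul s) | rewrite vr]. Qed.

Definition lmul_bc s : bicomm := Bicomm (bicommutant_lmul s).
Definition rmul_bc s : bicomm := Bicomm (bicommutant_rmul s).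

Lemma rmorph_on_lmul_bc : rmorph_on (@fullset S) lmul_bc.
Proof.
split=> [|x y _ _].
  by apply: bicomm_eq => u; apply: lin_map_eq => t /=; rewrite rmorph1 mul1r.
split; apply: bicomm_eq => u; apply: lin_map_eq => t /=; first by rewrite rmorphD mulrDl.
by rewrite rmorphM mulrA.
Qed.

Lemma rmorph_on_rmul_bc : rmorph_on (@fullset S) rmul_bc.
Proof.
split=> [|x y _ _]; first by apply: bicomm_eq => u; apply: lin_map_eq => t /=; rewrite mul1r.
split; apply: bicomm_eq => u; apply: lin_map_eq => t /=; last by rewrite mulrCA mulrA.
by case: u => f [fD _] /=; rewrite mulrDl fD.
Qed.

Lemma epi_linear_over : epi_on id A0 (@fullset S) ->
  forall phi, linear_over phi -> forall c, phi c = iota c * phi 1.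
Proof.
move=> epi phi phiP c.
have lr : lmul_bc c = rmul_bc c.
  apply: (epi _ _ _ rmorph_on_lmul_bc rmorph_on_rmul_bc) => // a Aa.
  by apply: bicomm_eq => -[f [fD fZ]]; apply: lin_map_eq => t /=; rewrite fZ.
by have /= -> := congr1 (fun w : bicomm => w (LinMap phiP) 1) lr; rewrite mulr1.
Qed.

End Bicommutant.

Definition is_subfield (F : fieldType) (K : F -> Prop) :=
  is_subring K /\ forall x, K x -> K x^-1.

Section Hyperplane.
Variables (F : fieldType) (K : F -> Prop) (d : F).
Hypotheses (hK : is_subfield K) (Kd : ~ K d).

Definition submodule (W : F -> Prop) :=
  (forall k w, K k -> W w -> W (k * w)) /\ (forall x y, W x -> W y -> W (x + y)).

Lemma exists_max_submodule : exists W, [/\ submodule W /\ ~ W 1, W d &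
  forall V, submodule V /\ ~ V 1 -> (forall x, W x -> V x) -> forall x, V x -> W x].
Proof.
have [hKr KV] := hK.
have [W [PW KdW Wmax]] : exists W, [/\ submodule W /\ ~ W 1,
    (forall x, (exists2 k, K k & x = k * d) -> W x) &
    forall V, submodule V /\ ~ V 1 -> (forall x, W x -> V x) -> forall x, V x -> W x].
  apply: zorn_above => [| |F' F'P [X0 F'X0] F'tot].
  - by exists d, 1; [apply: subring1 | rewrite mul1r].
  - split; first split=> [k _ Kk [k' Kk' ->]|_ _ [k Kk ->] [k' Kk' ->]].
    + by exists (k * k'); [apply: subringM | rewrite mulrA].
    + by exists (k + k'); [apply: subringD | rewrite mulrDl].
    move=> [k Kk kd1]; apply: Kd.
    have k0 : k != 0 by apply/eqP => k0; move/eqP: kd1; rewrite k0 mul0r oner_eq0.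
    by rewrite -(mulKf k0 d) -kd1 mulr1; apply: KV.
  - have F'sub X : F' X -> submodule X by move=> /F'P [[]].
    split; last by move=> [X [F'X X1]]; case: (F'P X F'X) => -[_ +] _; apply.
    split=> [k w Kk [X [F'X Xw]] | x y [X [F'X Xx]] [Y [F'Y Yy]]].
      by exists X; split=> //; apply: (F'sub X F'X).1.
    case: (F'tot X Y F'X F'Y) => XY.
      by exists Y; split=> //; apply: (F'sub Y F'Y).2 (XY x Xx) Yy.
    by exists X; split=> //; apply: (F'sub X F'X).2 Xx (XY y Yy).
by exists W; split=> //; apply: KdW; exists 1; [apply: subring1 | rewrite mul1r].
Qed.

Lemma max_submodule_decomp W : submodule W -> ~ W 1 -> W d ->
  (forall V, submodule V /\ ~ V 1 -> (forall x, W x -> V x) -> forall x, V x -> W x) ->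
  forall y, exists2 k, K k & W (y - k).
Proof.
move=> [WZ WD] W1 Wd Wmax y; have [hKr KV] := hK.
have [[w [t [Ww [Kt e1]]]] | noW] := pselect (exists w t, W w /\ K t /\ 1 = w + t * y).
  have t0 : t != 0 by apply/eqP => t0; apply: W1; rewrite e1 t0 mul0r addr0.
  exists t^-1; first exact: KV.
  have -> : y - t^-1 = (- t^-1) * w.
    have -> : w = 1 - t * y by rewrite e1 addrK.
    by rewrite mulrBr mulr1 mulNr mulKf // opprK addrC.
  by apply: WZ Ww; apply/(subringN hKr)/KV.
exists 0; first exact: subring0 hKr; rewrite subr0.
pose V z := exists w t, W w /\ K t /\ z = w + t * y.
have W0 : W 0 by rewrite -(mul0r d); apply: WZ (subring0 hKr) Wd.
apply: (Wmax V); last by exists 0, 1; rewrite add0r mul1r; do 2?split=> //; apply: subring1.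
- split; last by move=> [w [t [Ww [Kt e1]]]]; apply: noW; exists w, t.
  split=> [k _ Kk [w [t [Ww [Kt ->]]]] | _ _ [w [t [Ww [Kt ->]]]] [w' [t' [Ww' [Kt' ->]]]]].
    exists (k * w), (k * t); rewrite mulrDr mulrA.
    by split; [apply: WZ | split; first apply: subringM].
  exists (w + w'), (t + t'); rewrite mulrDl addrACA.
  by split; [apply: WD | split; first apply: subringD].
- by move=> w Ww; exists w, 0; rewrite mul0r addr0; do 2?split=> //; apply: subring0.
Qed.

(* [nu] is the projection onto [K] along a maximal [K]-submodule containing [d] but not [1]. *)
Lemma exists_functional : exists nu : F -> F, [/\ forall x y, nu (x + y) = nu x + nu y,
  forall k y, K k -> nu (k * y) = k * nu y, nu 1 = 1 & nu d = 0].
Proof.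
have [hKr KV] := hK.
have [W [[[WZ WD] W1] Wd Wmax]] := exists_max_submodule.
have decomp := max_submodule_decomp (conj WZ WD) W1 Wd Wmax.
have uniq y k k' : K k -> K k' -> W (y - k) -> W (y - k') -> k = k'.
  move=> Kk Kk' Wk Wk'; apply/eqP; rewrite -subr_eq0; apply/negPn/negP => kk'.
  have Wkk' : W (k - k').
    rewrite (_ : k - k' = (y - k') + (-1) * (y - k)); last ring.
    by apply: WD Wk' (WZ _ _ _ Wk); apply/(subringN hKr)/(subring1 hKr).
  by apply: W1; rewrite -(mulVf kk'); apply: WZ Wkk'; apply: KV (subringB hKr Kk Kk').
pose nu y := s2val (cid2 (decomp y)).
have nuK y : K (nu y) := s2valP (cid2 (decomp y)).
have nuW y : W (y - nu y) := s2valP' (cid2 (decomp y)).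
exists nu; split.
- move=> x y; apply: (uniq (x + y)) => //; first exact: subringD.
  by rewrite opprD addrACA; apply: WD.
- move=> k y Kk; apply: (uniq (k * y)) => //; first exact: subringM.
  by rewrite -mulrBr; apply: WZ.
- apply: (uniq 1) => //; first exact: subring1.
  by rewrite subrr -(mul0r d); apply: WZ (subring0 hKr) Wd.
- by apply: (uniq d) => //; [exact: subring0 | rewrite subr0].
Qed.

End Hyperplane.

Section EpiCoefClosed.
Variables (S : comNzRingType) (A0 : S -> Prop) (Q : {poly S} -> Prop).
Hypotheses (hA0 : is_subring A0) (hQ : is_prime_ideal Q).

Definition res_const : S -> residue_field hQ := res hQ \o polyC.
HB.instance Definition _ := GRing.RMorphism.on res_const.

Local Notation io := res_const.

Lemma res_const_eq0 s : io s = 0 <-> Q s%:P.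
Proof. exact: res_eq0. Qed.

Lemma res_constD x y : io (x + y) = io x + io y. Proof. exact: rmorphD. Qed.
Lemma res_constB x y : io (x - y) = io x - io y. Proof. exact: rmorphB. Qed.
Lemma res_constM x y : io (x * y) = io x * io y. Proof. exact: rmorphM. Qed.

Definition fracs (y : residue_field hQ) :=
  exists a b, [/\ A0 a, A0 b, io b != 0 & y = io a / io b].

Lemma fracs_res a : A0 a -> fracs (io a).
Proof. by exists a, 1; rewrite rmorph1 divr1 oner_neq0; split=> //; apply: subring1 hA0. Qed.

Lemma subfield_fracs : is_subfield fracs.
Proof.
split; last first.
  move=> x [a [b [Aa Ab b0 ->]]]; have [a0|a0] := eqVneq (io a) 0.
    by rewrite a0 mul0r invr0 -(rmorph0 io); apply: fracs_res (subring0 hA0).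
  by exists b, a; rewrite invf_div.
split; first by rewrite -(rmorph1 io); apply: fracs_res (subring1 hA0).
have bb0 b b' : io b != 0 -> io b' != 0 -> io (b * b') != 0.
  by move=> b0 b'0; rewrite res_constM (mulf_neq0 b0 b'0).
split=> x y [a [b [Aa Ab b0 ->]]] [a' [b' [Aa' Ab' b'0 ->]]].
  exists (a * b' - a' * b), (b * b'); split.
  - by apply: (subringB hA0); apply: (subringM hA0).
  - exact: (subringM hA0 Ab Ab').
  - exact: bb0.
  - by rewrite res_constB !res_constM -(mulNr (io a')) (addf_div _ _ b0 b'0) mulNr.
exists (a * a'), (b * b'); split.
- exact: (subringM hA0 Aa Aa').
- exact: (subringM hA0 Ab Ab').
- exact: bb0.
- by rewrite !res_constM (mulf_div (io a)).
Qed.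

Lemma epi_res_fracs : epi_on id A0 (@fullset S) -> forall c, fracs (io c).
Proof.
move=> epi c; apply: contrapT => Fc.
have [nu [nuD nuZ nu1 nuc]] := exists_functional subfield_fracs Fc.
have phiP : linear_over io A0 (nu \o io).
  split=> [x y | a t Aa] /=; first by rewrite res_constD nuD.
  by rewrite res_constM nuZ //; apply: fracs_res.
have := epi_linear_over epi phiP c; rewrite /= nuc rmorph1 nu1 mulr1 => c0.
by apply: Fc; rewrite -c0 -(rmorph0 io); apply: fracs_res (subring0 hA0).
Qed.

Lemma common_denominator (g : {poly S}) : (forall c, fracs (io c)) ->
  exists b (h : {poly S}),
    [/\ A0 b, io b != 0, forall i, A0 h`_i & forall i, io h`_i = io b * io g`_i].
Proof.
move=> Fio; elim/poly_ind: g => [|g c [b [h [Ab b0 Ah hg]]]].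
  exists 1, 0; rewrite rmorph1 oner_neq0; split=> // [|i|i]; rewrite ?coef0 ?rmorph0 ?mulr0 //.
    exact: subring1 hA0.
  exact: subring0 hA0.
have [a [b' [Aa Ab' b'0 cE]]] := Fio c.
exists (b * b'), (h * b'%:P * 'X + (a * b)%:P); rewrite res_constM (mulf_neq0 b0 b'0).
split=> // [|i|i]; first exact: (subringM hA0 Ab Ab').
  case: i => [|i]; rewrite coefD coefMX coefC /= ?add0r ?addr0 ?coefMC.
    exact: (subringM hA0 Aa Ab).
  exact: (subringM hA0 (Ah i) Ab').
case: i => [|i]; rewrite !coefD !coefMX !coefC /= ?add0r ?addr0 ?coefMC !res_constM.
  by rewrite cE [RHS]mulrC mulrA mulrAC (mulfVK b'0) mulrC.
by rewrite hg mulrAC.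
Qed.

Lemma epi_coef_closed : epi_on id A0 (@fullset S) ->
  (forall h, Q h -> (forall i, A0 h`_i) -> forall i, Q (h`_i)%:P) -> coef_closed Q.
Proof.
move=> epi QA0 g Qg i.
have [b [h [Ab b0 Ah hg]]] := common_denominator g (epi_res_fracs epi).
have Qh : Q h.
  have Qhg : Q (h - b%:P * g).
    apply: (poly_ideal_sub (P := Q \o polyC)) => //; first exact: hQ.1.
    by move=> j; apply/res_const_eq0; rewrite coefB coefCM res_constB res_constM hg subrr.
  by rewrite -(subrK (b%:P * g) h); apply: idealD Qhg (ideal_mull _ hQ.1 Qg); exact: hQ.1.
have /res_const_eq0 := QA0 h Qh Ah i.
by rewrite hg => /eqP; rewrite mulf_eq0 (negbTE b0) => /eqP /res_const_eq0.
Qed.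

End EpiCoefClosed.

Section Epimorphisms.
Variables (R S : comNzRingType) (f : {rmorphism R -> S}).

Lemma quasi_pruferian_epi (A0 : S -> Prop) :
  quasi_pruferian R -> is_subring A0 -> epi_on id A0 (@fullset S) ->
  (forall a, A0 a -> integralOver f a) -> quasi_pruferian S.
Proof.
move=> qpR hA0 epi A0int; apply/quasi_pruferianP => Q hQ QS.
apply: (epi_coef_closed hA0 hQ epi) => h Qh Ah.
exact: quasi_pruferian_coef_integral qpR hQ QS Qh (fun i => A0int _ (Ah i)).
Qed.

Lemma quasi_pruferian_flat_epi :
  quasi_pruferian R -> flat_epimorphism f -> quasi_pruferian S.
Proof.
move=> qpR [_ fepi]; apply: (quasi_pruferian_epi (A0 := fun s => exists r, s = f r)) => //.
- split; first by exists 1; rewrite rmorph1.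
  split=> _ _ [r ->] [r' ->]; first by exists (r - r'); rewrite rmorphB.
  by exists (r * r'); rewrite rmorphM.
- by move=> T g h g_rm h_rm gh c _; apply: fepi => // r _; apply: gh; exists r.
- by move=> _ [r ->]; apply: integral_id.
Qed.

Lemma quasi_pruferian_quasi_prufer :
  quasi_pruferian R -> quasi_prufer_ext f -> quasi_pruferian S.
Proof.
move=> qpR [_ [A' [hA' [_ [A'int A'prufer]]]]].
have subringT : is_subring (@fullset S) by [].
have [_ epi] := A'prufer (@fullset S) subringT (fun _ _ => I).
by apply: (quasi_pruferian_epi qpR hA' epi) => a /(integral_on_integral A'int).
Qed.

End Epimorphisms.

Theorem mainTheorem17 (R S : comNzRingType) (f : {rmorphism R -> S}) :
  (quasi_pruferian R -> (integral_morphism f \/ flat_epimorphism f) ->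
     quasi_pruferian S) /\
  (quasi_pruferian S -> injective f -> integral_morphism f ->
     quasi_pruferian R) /\
  (quasi_pruferian R -> quasi_prufer_ext f -> quasi_pruferian S).
Proof.
split; last split.
- move=> qpR [fint | fepi].
    exact: quasi_pruferian_integral qpR fint.
  exact: quasi_pruferian_flat_epi qpR fepi.
- exact: quasi_pruferian_integral_inj.
- exact: quasi_pruferian_quasi_prufer.
Qed.
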